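(* The abelian group $\ell^\infty(\mathbb{Z})_S$ is divisible: for every $a\in\ell^\infty(\mathbb{Z})$ and every integer $n\ge1$ there exist $b,c\in\ell^\infty(\mathbb{Z})$ with $a-nb=c-Sc$.
   Context: $\ell^\infty(\mathbb{Z})$ denotes the abelian group of bounded integer-valued sequences $(a_j)_{j\in\mathbb{Z}}$, $S(a_j)_j=(a_{j+1})_j$ is the shift, and $\ell^\infty(\mathbb{Z})_S=\ell^\infty(\mathbb{Z})/\{a-Sa: a\in\ell^\infty(\mathbb{Z})\}$. *)

From Stdlib Require Import ZArith.
Open Scope Z_scope.

Definition bounded (a : Z -> Z) : Prop :=
  exists M : Z, forall j : Z, Z.abs (a j) <= M.

Definition seq_shift (a : Z -> Z) : Z -> Z := fun j => a (j + 1).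

From Stdlib Require Import ZArith Lia.
Open Scope Z_scope.

(* Let P be a primitive of a, i.e. P (j+1) - P j = a j
   (P is unbounded in general, so this is not a coboundary in l^oo).  Euclidean
   division P = n * q + r with 0 <= r < n gives
     a j = n * (q (j+1) - q j) + (r (j+1) - r j),
   so b := q (j+1) - q j and c := - r satisfy a - n b = c - S c.  Here c is
   bounded by n, and n * b = a - (S r - r) is bounded, hence so is b. *)

Fixpoint sum_up (a : Z -> Z) (m : nat) : Z :=
  match m with O => 0 | S m' => sum_up a m' + a (Z.of_nat m') end.

Fixpoint sum_down (a : Z -> Z) (m : nat) : Z :=
  match m with O => 0 | S m' => sum_down a m' + a (- Z.of_nat m' - 1) end.

Definition primitive (a : Z -> Z) (j : Z) : Z :=
  if Z.leb 0 j then sum_up a (Z.to_nat j) else - sum_down a (Z.to_nat (- j)).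

Lemma primitive_step (a : Z -> Z) (j : Z) : primitive a (j + 1) - primitive a j = a j.
Proof.
  unfold primitive. destruct (Z.leb_spec 0 j) as [Hj | Hj].
  - destruct (Z.leb_spec 0 (j + 1)); [| lia].
    replace (Z.to_nat (j + 1)) with (S (Z.to_nat j)) by lia; simpl.
    rewrite Z2Nat.id by lia. lia.
  - destruct (Z.leb_spec 0 (j + 1)).
    + assert (j = -1) by lia. subst j. simpl. lia.
    + replace (Z.to_nat (- j)) with (S (Z.to_nat (- (j + 1)))) by lia; simpl.
      rewrite Z2Nat.id by lia.
      replace (- (- (j + 1)) - 1) with j by lia. lia.
Qed.

Lemma bounded_ext (f g : Z -> Z) :
  (forall j, f j = g j) -> bounded f -> bounded g.
Proof. intros Hfg [M HM]. exists M. intros j. rewrite <- Hfg. apply HM. Qed.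

Lemma bounded_sub (f g : Z -> Z) :
  bounded f -> bounded g -> bounded (fun j => f j - g j).
Proof.
  intros [M HM] [N HN]. exists (M + N). intros j.
  specialize (HM j). specialize (HN j). lia.
Qed.

Lemma bounded_shift (f : Z -> Z) : bounded f -> bounded (seq_shift f).
Proof. intros [M HM]. exists M. intros j. apply HM. Qed.

Lemma bounded_mod (f : Z -> Z) (n : Z) : 0 < n -> bounded (fun j => f j mod n).
Proof.
  intros Hn. exists n. intros j.
  pose proof (Z.mod_pos_bound (f j) n Hn). lia.
Qed.

Lemma bounded_opp (f : Z -> Z) : bounded f -> bounded (fun j => - f j).
Proof. intros [M HM]. exists M. intros j. rewrite Z.abs_opp. apply HM. Qed.

Lemma bounded_of_bounded_mul (f : Z -> Z) (n : Z) :
  n <> 0 -> bounded (fun j => n * f j) -> bounded f.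
Proof.
  intros Hn [M HM]. exists M. intros j. specialize (HM j).
  rewrite Z.abs_mul in HM. pose proof (Z.abs_nonneg (f j)).
  assert (1 <= Z.abs n) by lia. nia.
Qed.

Lemma diff_div_mod (P : Z -> Z) (n j : Z) : n <> 0 ->
  P (j + 1) - P j
  = n * (P (j + 1) / n - P j / n) + (P (j + 1) mod n - P j mod n).
Proof.
  intros Hn.
  pose proof (Z.div_mod (P (j + 1)) n Hn).
  pose proof (Z.div_mod (P j) n Hn). lia.
Qed.

Theorem lemma5p1 :
  forall (a : Z -> Z) (n : Z), bounded a -> 1 <= n ->
  exists (b c : Z -> Z), bounded b /\ bounded c /\
    forall j : Z, a j - n * b j = c j - seq_shift c j.
Proof.
  intros a n Ha Hn.
  set (P := primitive a).
  set (r := fun j => P j mod n).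
  assert (Hdecomp : forall j, a j = n * (P (j + 1) / n - P j / n) + (seq_shift r j - r j)).
  { intros j. rewrite <- (primitive_step a j). apply diff_div_mod. lia. }
  exists (fun j => P (j + 1) / n - P j / n), (fun j => - r j).
  split; [| split].
  - (* n * b = a - (S r - r) is bounded. *)
    apply (bounded_of_bounded_mul _ n); [lia |].
    assert (Hr : bounded r) by (apply bounded_mod; lia).
    apply (bounded_ext (fun j => a j - (seq_shift r j - r j))).
    + intros j. rewrite (Hdecomp j). lia.
    + apply bounded_sub; [exact Ha |]. apply bounded_sub; [apply bounded_shift |]; exact Hr.
  - apply bounded_opp, bounded_mod. lia.
  - intros j. rewrite (Hdecomp j). unfold seq_shift. lia.
Qed.
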